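(* Let $m\ge1$, $n\ge1$, $N>2n$, and let $\mathbf y$ be a stationary reciprocal process of order $n$ on $\mathbb Z_N$, with conjugate process $\mathbf d(t)=\mathbf y(t)-\hat{\mathbb E}[\mathbf y(t)\mid\mathbf y(s),s\ne t]$ and $\Delta=\mathbb E\,\mathbf d(t)\mathbf d(t)^\top$. Then $\mathbf y$ is full rank if and only if $\Delta$ is positive definite.
   Context: A process on $\mathbb Z_N$ is a zero-mean second-order $\mathbb R^m$-valued process $\{\mathbf y(t)\}_{t=1}^N$, time indices taken modulo $N$, whose covariance $\boldsymbol\Sigma_N=\mathbb E\,\mathbf y\mathbf y^\top$ is symmetric block-circulant (its $(i,j)$ block depends only on $(i-j)\bmod N$); such a process is stationary, and $\Delta$ does not depend on $t$. Full rank means $\boldsymbol\Sigma_N>0$. $\hat{\mathbb E}[\cdot\mid\cdot]$ is orthogonal projection onto the closed linear span of the scalar components of the conditioning variables. Subspaces $\mathcal A,\mathcal B$ are conditionally orthogonal given $\mathcal C$ if $a-\hat{\mathbb E}[a\mid\mathcal C]$ and $b-\hat{\mathbb E}[b\mid\mathcal C]$ are uncorrelated for all $a\in\mathcal A,b\in\mathcal B$. The process is reciprocal of order $n$ if for every cyclic interval $(t_1,t_2)$ the variables $\{\mathbf y(t):t\in(t_1,t_2)\}$ are conditionally orthogonal to $\{\mathbf y(s):s\notin(t_1,t_2)\}$ given $\mathbf y(t_1-n+1),\dots,\mathbf y(t_1),\mathbf y(t_2),\dots,\mathbf y(t_2+n-1)$. *)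

(* A zero-mean second-order R^m-valued process on Z_N is
   represented through the Hilbert-space geometry of the closed linear span of
   its scalar components, which is entirely determined by the covariance
   matrix Sigma_N.  Scalar components are indexed by (t,i) : 'I_N * 'I_m; an
   element of the (finite-dimensional) linear span is given by a coefficient
   vector a : idx -> R, standing for sum_(t,i) a(t,i) y_i(t); the L^2 inner
   product of two such elements is a^T Sigma_N b. *)
From HB Require Import structures.
From mathcomp Require Import all_boot all_order all_algebra.
Set Implicit Arguments. Unset Strict Implicit. Unset Printing Implicit Defensive.
Import Order.TTheory GRing.Theory Num.Theory.
Local Open Scope ring_scope.

Section Defs.
Variables (R : realFieldType) (N m : nat).

Definition idx := ('I_N * 'I_m)%type.

(* covariance Sigma_N, seen as a function of two component indices:
   Sig (s,i) (t,j) = E y_i(s) y_j(t) *)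
Definition covf := idx -> idx -> R.

Definition coef := idx -> R.

Definition ip (Sig : covf) (a b : coef) : R :=
  \sum_(u : idx) \sum_(v : idx) a u * Sig u v * b v.

(* the scalar component y_i(t) itself *)
Definition ecomp (u : idx) : coef := fun v => (v == u)%:R.

Definition csub (a b : coef) : coef := fun v => a v - b v.

(* a lies in the linear span of the components whose index satisfies A *)
Definition supp_in (A : pred idx) (a : coef) : Prop :=
  forall u, ~~ A u -> a u = 0.

(* p represents \hat E[ x | components in C ] : p is in the span of C and
   x - p is uncorrelated with every component in C *)
Definition is_proj (Sig : covf) (C : pred idx) (x p : coef) : Prop :=
  supp_in C p /\ forall u, C u -> ip Sig (csub x p) (ecomp u) = 0.

Definition cond_orth (Sig : covf) (A B C : pred idx) : Prop :=
  forall a b pa pb : coef,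
    supp_in A a -> supp_in B b -> is_proj Sig C a pa -> is_proj Sig C b pb ->
    ip Sig (csub a pa) (csub b pb) = 0.

Definition block_circulant (Sig : covf) : Prop :=
  exists Cb : nat -> 'I_m -> 'I_m -> R,
    forall (s t : 'I_N) (i j : 'I_m),
      Sig (s, i) (t, j) = Cb ((s + N - t) %% N)%N i j.

Definition second_order_cov (Sig : covf) : Prop :=
  [/\ forall u v, Sig u v = Sig v u,
      forall a : coef, 0 <= ip Sig a a
    & block_circulant Sig].

(* cyclic open interval (t1,t2) = {t1+1, ..., t2-1} (mod N) *)
Definition cyc_interior (t1 t2 s : 'I_N) : bool :=
  let d := ((t2 + N - t1) %% N)%N in
  let k := ((s + N - t1) %% N)%N in
  (0 < k)%N && (k < d)%N.

(* boundary {t1-n+1, ..., t1} u {t2, ..., t2+n-1} (mod N) *)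
Definition cyc_boundary (n : nat) (t1 t2 s : 'I_N) : bool :=
  (((t1 + N - s) %% N)%N < n)%N || (((s + N - t2) %% N)%N < n)%N.

Definition reciprocal (n : nat) (Sig : covf) : Prop :=
  forall t1 t2 : 'I_N,
    cond_orth Sig (fun u : idx => cyc_interior t1 t2 u.1)
                  (fun u : idx => ~~ cyc_interior t1 t2 u.1)
                  (fun u : idx => cyc_boundary n t1 t2 u.1).

Definition full_rank (Sig : covf) : Prop :=
  forall a : coef, (exists u, a u != 0) -> 0 < ip Sig a a.

Definition conjugate_process (Sig : covf) (d : 'I_N -> 'I_m -> coef) : Prop :=
  forall (t : 'I_N) (i : 'I_m), exists p : coef,
    is_proj Sig (fun u : idx => u.1 != t) (ecomp (t, i)) p /\
    d t i = csub (ecomp (t, i)) p.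

Definition Delta (Sig : covf) (d : 'I_N -> 'I_m -> coef) (t : 'I_N) : 'M[R]_m :=
  \matrix_(i, j) ip Sig (d t i) (d t j).

End Defs.

Definition posdef (R : realFieldType) (m : nat) (M : 'M[R]_m) : Prop :=
  forall v : 'cV[R]_m, v != 0 -> 0 < (v^T *m M *m v) ord0 ord0.

(* For v in R^m, v^T Delta v is the squared norm of w = sum_i v_i d_i(t).  Each
   d_i(t) is y_i(t) minus an element of the span of {y(s) : s <> t}, so the
   coefficients of w at time t are exactly v; hence w <> 0 when v <> 0 and a
   full rank process has Delta > 0.  Conversely, let a be a null vector of
   Sigma_N.  By stationarity we may shift it so that its coefficient vector v at
   time t is nonzero.  Then a = w + u with u in the span of {y(s) : s <> t},
   which is orthogonal to w, so 0 = |a|^2 = v^T Delta v + |u|^2 >= v^T Delta v,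
   and Delta is not positive definite. *)
From mathcomp Require Import all_boot all_order all_algebra.
From mathcomp Require Import zify ring lra.
Set Implicit Arguments. Unset Strict Implicit. Unset Printing Implicit Defensive.
Import Order.TTheory GRing.Theory Num.Theory.
Local Open Scope ring_scope.

Section InnerProduct.
Variables (R : realFieldType) (N m : nat) (Sig : covf R N m).

Lemma ip_nested (a b : coef R N m) :
  ip Sig a b = \sum_u a u * \sum_v Sig u v * b v.
Proof.
apply: eq_bigr => u _; rewrite big_distrr; apply: eq_bigr => v _ /=.
by rewrite mulrA.
Qed.

Lemma ip_suml (I : finType) (c : I -> R) (f : I -> coef R N m) b :
  ip Sig (fun u => \sum_k c k * f k u) b = \sum_k c k * ip Sig (f k) b.
Proof.
rewrite ip_nested; under eq_bigr do rewrite big_distrl.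
rewrite exchange_big; apply: eq_bigr => k _.
by rewrite ip_nested big_distrr; apply: eq_bigr => u _ /=; rewrite mulrA.
Qed.

Lemma ip_addl (x y b : coef R N m) :
  ip Sig (fun u => x u + y u) b = ip Sig x b + ip Sig y b.
Proof. by rewrite !ip_nested -big_split; apply: eq_bigr => u _; rewrite mulrDl. Qed.

Lemma ip_ecompr (x : coef R N m) v :
  ip Sig x (ecomp R v) = \sum_u x u * Sig u v.
Proof.
rewrite ip_nested; apply: eq_bigr => u _; congr (_ * _).
rewrite (bigD1 v) //= big1 ?addr0; first by rewrite /ecomp eqxx mulr1.
by move=> w /negbTE nwv; rewrite /ecomp nwv mulr0.
Qed.

Lemma ip_expandr (x b : coef R N m) :
  ip Sig x b = \sum_v ip Sig x (ecomp R v) * b v.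
Proof.
under eq_bigr do rewrite ip_ecompr.
by rewrite /ip exchange_big; apply: eq_bigr => v _; rewrite big_distrl.
Qed.

Lemma ip_supp_orth (C : pred (idx N m)) (x b : coef R N m) :
  (forall u, C u -> ip Sig x (ecomp R u) = 0) -> supp_in C b -> ip Sig x b = 0.
Proof.
move=> xC bC; rewrite ip_expandr big1 // => u _.
by have [/xC -> | /bC ->] := boolP (C u); rewrite ?mul0r ?mulr0.
Qed.

Hypothesis Sig_sym : forall u v, Sig u v = Sig v u.

Lemma ip_sym (a b : coef R N m) : ip Sig a b = ip Sig b a.
Proof.
rewrite /ip exchange_big; apply: eq_bigr => u _; apply: eq_bigr => v _.
by rewrite Sig_sym; ring.
Qed.

Lemma ip_add_orth (w u : coef R N m) : ip Sig w u = 0 ->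
  ip Sig (fun x => w x + u x) (fun x => w x + u x) = ip Sig w w + ip Sig u u.
Proof.
move=> wu0; rewrite ip_addl !(ip_sym _ (fun x => w x + u x)) !ip_addl.
by rewrite (ip_sym u w) wu0 addr0 add0r.
Qed.

End InnerProduct.

Lemma modn_subDr (N r1 r2 c : nat) : (0 < N)%N -> (r1 < N)%N -> (r2 < N)%N ->
  (((r1 + c) %% N + N - (r2 + c) %% N) %% N = (r1 + N - r2) %% N)%N.
Proof.
move=> N_gt0 r1N r2N; apply/eqP; rewrite -(eqn_modDr (r2 + c)) -modnDmr.
have r2cN : ((r2 + c) %% N < N)%N by rewrite ltn_pmod.
have -> : ((r1 + c) %% N + N - (r2 + c) %% N + (r2 + c) %% N =
           (r1 + c) %% N + N)%N by lia.
have -> : (r1 + N - r2 + (r2 + c) = r1 + c + N)%N by lia.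
by rewrite modnDml.
Qed.

Section Rotation.
Variables (R : realFieldType) (N m : nat) (N_gt0 : (0 < N)%N).

Definition rot_ord (c : nat) (s : 'I_N) : 'I_N := Ordinal (ltn_pmod (s + c) N_gt0).

Lemma rot_ord_inj c : injective (rot_ord c).
Proof.
move=> r1 r2 /(congr1 val) /eqP /=; rewrite eqn_modDr !modn_small //.
by move/eqP/val_inj.
Qed.

Lemma rot_ord_sub (s t : 'I_N) : rot_ord (s + N - t) t = s.
Proof.
apply/val_inj => /=.
have -> : (t + (s + N - t) = s + N)%N by have := ltn_ord t; lia.
by rewrite modnDr modn_small.
Qed.

Definition rot_coef (c : nat) (a : coef R N m) : coef R N m :=
  fun u => a (rot_ord c u.1, u.2).

Lemma ip_rot_coef (Sig : covf R N m) c (a b : coef R N m) :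
  block_circulant Sig -> ip Sig (rot_coef c a) (rot_coef c b) = ip Sig a b.
Proof.
move=> [Cb SigE].
pose h (u : idx N m) := (rot_ord c u.1, u.2).
have h_inj : injective h.
  move=> [r1 i] [r2 j] /eqP; rewrite xpair_eqE /=.
  by case/andP=> [/eqP/rot_ord_inj -> /eqP ->].
symmetry; rewrite /ip (reindex_inj h_inj); apply: eq_bigr => u _.
rewrite (reindex_inj h_inj); apply: eq_bigr => v _.
by case: u v => [r1 i] [r2 j]; rewrite /h /= !SigE /= modn_subDr.
Qed.

End Rotation.

Section ConjugateProcess.
Variables (R : realFieldType) (N m : nat) (Sig : covf R N m).
Variables (d : 'I_N -> 'I_m -> coef R N m) (t : 'I_N).
Hypothesis d_conj : conjugate_process Sig d.

Definition conj_comb (v : 'cV[R]_m) : coef R N m :=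
  fun u => \sum_i v i ord0 * d t i u.

Lemma conj_comb_at v i : conj_comb v (t, i) = v i ord0.
Proof.
rewrite /conj_comb (bigD1 i) //= big1 ?addr0 => [|k ki].
  have [p [[p_off _] ->]] := d_conj t i.
  by rewrite /csub /ecomp eqxx p_off ?eqxx // subr0 mulr1.
have [p [[p_off _] ->]] := d_conj t k.
rewrite /csub /ecomp p_off ?eqxx //= subr0.
by rewrite xpair_eqE eqxx eq_sym (negbTE ki) mulr0.
Qed.

Lemma conj_comb_orth v b :
  supp_in (fun u : idx N m => u.1 != t) b -> ip Sig (conj_comb v) b = 0.
Proof.
apply: ip_supp_orth => u ut; rewrite ip_suml big1 // => k _.
by have [p [[_ p_orth] ->]] := d_conj t k; rewrite p_orth ?mulr0.
Qed.

Hypothesis Sig_sym : forall u v, Sig u v = Sig v u.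

Lemma Delta_form v :
  (v^T *m Delta Sig d t *m v) ord0 ord0 = ip Sig (conj_comb v) (conj_comb v).
Proof.
rewrite mxE; under eq_bigr do rewrite mxE big_distrl.
rewrite exchange_big ip_suml; apply: eq_bigr => i _.
rewrite (ip_sym Sig_sym) ip_suml big_distrr; apply: eq_bigr => j _ /=.
by rewrite !mxE (ip_sym Sig_sym (d t j)); ring.
Qed.

Lemma posdef_Delta_of_full_rank : full_rank Sig -> posdef (Delta Sig d t).
Proof.
move=> Sig_pd v; rewrite matrix_eq0 => /forallPn [i /forallPn [j vij]].
rewrite Delta_form; apply: Sig_pd; exists (t, i).
by rewrite conj_comb_at; rewrite (ord1 j) in vij.
Qed.

Hypothesis Sig_psd : forall a : coef R N m, 0 <= ip Sig a a.

Lemma isotropic_coef_eq0_at (a : coef R N m) i :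
  posdef (Delta Sig d t) -> ip Sig a a = 0 -> a (t, i) = 0.
Proof.
move=> Delta_pd a_null; apply/eqP; apply: contraT => ati.
pose v : 'cV[R]_m := \col_k a (t, k).
have v_neq0 : v != 0.
  by apply: contra ati => /eqP/matrixP/(_ i ord0); rewrite !mxE => ->.
pose u := fun x => a x - conj_comb v x.
have u_off : supp_in (fun x : idx N m => x.1 != t) u.
  by case=> s k /=; rewrite negbK => /eqP -> /=; rewrite /u conj_comb_at mxE subrr.
have : ip Sig a a = ip Sig (conj_comb v) (conj_comb v) + ip Sig u u.
  rewrite -ip_add_orth ?conj_comb_orth //.
  by rewrite /ip; apply: eq_bigr => x _; apply: eq_bigr => y _; rewrite /u !subrKC.
have := Delta_pd v v_neq0; have := Sig_psd u; rewrite Delta_form a_null; lra.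
Qed.

Lemma full_rank_of_posdef_Delta :
  block_circulant Sig -> posdef (Delta Sig d t) -> full_rank Sig.
Proof.
move=> Sig_circ Delta_pd a [[s i] asi]; rewrite lt_def Sig_psd andbT.
apply: contra asi => /eqP a_null.
have N_gt0 : (0 < N)%N by apply: leq_ltn_trans (ltn_ord t).
pose a' := rot_coef N_gt0 (s + N - t) a.
have a'_null : ip Sig a' a' = 0 by rewrite ip_rot_coef.
have := isotropic_coef_eq0_at i Delta_pd a'_null.
by rewrite /a' /rot_coef rot_ord_sub => ->.
Qed.

End ConjugateProcess.

Theorem proposition2 (R : realFieldType) (m n N : nat)
    (Sig : covf R N m) (d : 'I_N -> 'I_m -> coef R N m) (t : 'I_N) :
  (1 <= m)%N -> (1 <= n)%N -> (2 * n < N)%N ->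
  second_order_cov Sig -> reciprocal n Sig -> conjugate_process Sig d ->
  (full_rank Sig <-> posdef (Delta Sig d t)).
Proof.
move=> _ _ _ [Sig_sym Sig_psd Sig_circ] _ d_conj; split.
- exact: posdef_Delta_of_full_rank.
- exact: full_rank_of_posdef_Delta.
Qed.
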